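(* Let $M\ge 2$ be even, $T\ge 1$, $\mathcal{X}'=\{\pm1,\pm3,\ldots,\pm(M-1)\}$, $\mathcal{X}=\{x\in\mathbb{C}: \mathrm{Re}(x)\in\mathcal{X}',\ \mathrm{Im}(x)\in\mathcal{X}'\}$ (square $M^2$-QAM), and $\mathcal{C}=\mathcal{X}^T\subset\mathbb{C}^T$. Let $\mathbf{y}\in\mathbb{C}^T$, $\mathbf{y}\neq\mathbf 0$. Let $\mathbf{x}^{\mathrm{opt}}$ be any maximizer of $|\hat{\mathbf{x}}^\dagger\mathbf{y}|^2/\|\hat{\mathbf{x}}\|^2$ over $\hat{\mathbf{x}}\in\mathcal{C}$, let $h^{\mathrm{opt}}=(\mathbf{x}^{\mathrm{opt}})^\dagger\mathbf{y}/\|\mathbf{x}^{\mathrm{opt}}\|^2$ and $\lambda^{\mathrm{opt}}=1/h^{\mathrm{opt}}$. Then for all $t=1,\ldots,T$, $|\mathrm{Re}(\lambda^{\mathrm{opt}}y_t)|\le M+2T-2$ and $|\mathrm{Im}(\lambda^{\mathrm{opt}}y_t)|\le M+2T-2$.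
   Context: $(\cdot)^\dagger$ is the Hermitian transpose and $\|\cdot\|$ the Euclidean norm. This is noncoherent GLRT detection of $M^2$-ary square QAM codewords of length $T$ over a complex-valued block fading channel $\mathbf{y}=h\mathbf{x}+\mathbf{n}$; since $\mathbf{y}\neq\mathbf 0$ the maximum is positive so $h^{\mathrm{opt}}\neq 0$. *)

(* Complex numbers are modelled by an arbitrary
   numClosedFieldType C (algebraically closed field with conjugation,
   'Re, 'Im, norm); the field of complex numbers is the intended instance. *)
From HB Require Import structures.
From mathcomp Require Import all_boot all_order all_algebra.
Set Implicit Arguments. Unset Strict Implicit. Unset Printing Implicit Defensive.
Import Order.TTheory GRing.Theory Num.Theory.
Local Open Scope ring_scope.

Definition pam (C : numClosedFieldType) (M : nat) (a : C) : bool :=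
  [exists k : 'I_(M %/ 2), (a == (2 * k + 1)%N%:R) || (a == - (2 * k + 1)%N%:R)].

Definition qam (C : numClosedFieldType) (M : nat) (x : C) : bool :=
  pam M ('Re x) && pam M ('Im x).

Definition in_codebook (C : numClosedFieldType) (M T : nat) (x : 'I_T -> C) : Prop :=
  forall t, qam M (x t).

Definition hinner (C : numClosedFieldType) (T : nat) (x y : 'I_T -> C) : C :=
  \sum_(t < T) (x t)^* * y t.

Definition normsq (C : numClosedFieldType) (T : nat) (x : 'I_T -> C) : C :=
  \sum_(t < T) `|x t| ^+ 2.

Definition glrt_metric (C : numClosedFieldType) (T : nat) (x y : 'I_T -> C) : C :=
  `|hinner x y| ^+ 2 / normsq x.

(* Write z = lambda_opt * y and x = x_opt.  The proof has three ingredients.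
   1. GLRT optimality of x means that x is a codeword nearest to z in
      Euclidean distance (an AM-GM argument on the expanded distance); hence
      every real/imaginary component of x is a PAM point nearest to the
      corresponding component of z.
   2. The choice of lambda_opt makes the residual orthogonal to x:
      Re (x^dagger (z - x)) = 0, i.e. the 2T "gains" a * (r - a), where a is a
      component of x and r the matching component of z, sum to zero.
   3. For a nearest PAM point a of r, the gain a * (r - a) is at least
      -(M - 1), and exceeds (2T - 1)(M - 1) as soon as |r| > M + 2T - 2.
      Since 2T numbers bounded below by -(M - 1) and summing to zero are all
      at most (2T - 1)(M - 1), no component of z can be that large. *)
From HB Require Import structures.
From mathcomp Require Import all_boot all_order all_algebra zify ring.
Import Order.TTheory GRing.Theory Num.Theory.
Local Open Scope ring_scope.
Set Implicit Arguments. Unset Strict Implicit. Unset Printing Implicit Defensive.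

Section Pam.
Variable C : numClosedFieldType.
Variable M : nat.

Lemma pamP (a : C) : pam M a ->
  exists2 k : nat, (k < M %/ 2)%N & a = (2 * k + 1)%:R \/ a = - (2 * k + 1)%:R.
Proof. by case/existsP=> k /orP[] /eqP ->; exists (nat_of_ord k) => //; [left|right]. Qed.

Lemma pam_pos (k : nat) : (k < M %/ 2)%N -> pam M ((2 * k + 1)%:R : C).
Proof. by move=> hk; apply/existsP; exists (Ordinal hk); rewrite eqxx. Qed.

Lemma pam_neg (k : nat) : (k < M %/ 2)%N -> pam M (- (2 * k + 1)%:R : C).
Proof. by move=> hk; apply/existsP; exists (Ordinal hk); rewrite eqxx orbT. Qed.

Lemma pamN (a : C) : pam M (- a) = pam M a.
Proof.
apply/idP/idP => /pamP [k hk [] ha].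
- by rewrite -[a]opprK ha; apply: pam_neg.
- by rewrite -[a]opprK ha opprK; apply: pam_pos.
- by rewrite ha; apply: pam_neg.
- by rewrite ha opprK; apply: pam_pos.
Qed.

Lemma pam_real (a : C) : pam M a -> a \is Num.real.
Proof. by case/pamP=> k _ [] ->; rewrite ?rpredN realn. Qed.

Lemma pam_neq0 (a : C) : pam M a -> a != 0.
Proof. by case/pamP=> k _ [] ->; rewrite ?oppr_eq0 pnatr_eq0 addn1. Qed.

Lemma pam_bound (a : C) : pam M a -> `|a| <= (M - 1)%:R.
Proof. by case/pamP=> k hk [] ->; rewrite ?normrN normr_nat ler_nat; lia. Qed.

Lemma pam_outer : (2 <= M)%N -> ~~ odd M -> pam M ((M - 1)%:R : C).
Proof.
move=> hM2 hev.
have hM : M = (M %/ 2).*2 by rewrite -[LHS]odd_double_half (negbTE hev) divn2.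
have hk : (M %/ 2 - 1 < M %/ 2)%N by lia.
by have := pam_pos hk; congr (pam M _%:R); lia.
Qed.

Lemma pam_pred (k : nat) : (k < M %/ 2)%N -> pam M ((2 * k + 1)%:R - 2 : C).
Proof.
case: k => [|k] hk.
  have -> : (2 * 0 + 1)%:R - 2 = - (2 * 0 + 1)%:R :> C.
    by rewrite -opprB -[2%:R]/(1 + 1 : C) addrK.
  exact: pam_neg.
have -> : (2 * k.+1 + 1)%:R - 2 = (2 * k + 1)%:R :> C.
  by rewrite mulnS -addnA addnC natrD addrK.
by apply: pam_pos; apply: ltnW.
Qed.
End Pam.

Section NearestPoint.
Variable C : numClosedFieldType.
Variable M : nat.

Definition pam_nearest (r a : C) : Prop :=
  forall b, pam M b -> (r - a) ^+ 2 <= (r - b) ^+ 2.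

Lemma pam_nearestN (r a : C) : pam_nearest r a -> pam_nearest (- r) (- a).
Proof.
move=> near b hb; have := near (- b); rewrite pamN => /(_ hb).
have e1 : - r - - a = - (r - a) by rewrite opprD.
have e2 : - r - b = - (r - - b) by rewrite opprD opprK.
by rewrite e1 e2 !sqrrN.
Qed.

Lemma gainN (r a : C) : - a * (- r - - a) = a * (r - a).
Proof. by rewrite -opprD mulrNN. Qed.

(* Comparing a positive nearest point with its lower neighbour a - 2 shows
   r - a >= -1, hence the gain is at least -a >= -(M-1). *)
Lemma nearest_gain_ge_pos (k : nat) (r a : C) : (k < M %/ 2)%N ->
  a = (2 * k + 1)%:R -> pam_nearest r a -> - (M - 1)%:R <= a * (r - a).
Proof.
move=> hk ea near.
have := near _ (pam_pred C hk); rewrite -ea.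
have -> : r - (a - 2) = (r - a) + 2 by rewrite opprB addrCA addrC.
move: (r - a) => d.
rewrite sqrrD -addrA lerDl.
have -> : d * 2 *+ 2 + 2 ^+ 2 = (d + 1) * 4%:R.
  by rewrite mulrDl mul1r -mulrnAr -mulrnA expr2 -natrM.
rewrite pmulr_lge0 ?ltr0n // => hd.
have ha : 0 <= a by rewrite ea ler0n.
have gain_ge : - a <= a * d.
  by rewrite -subr_ge0 opprK -{2}[a]mulr1 -mulrDr mulr_ge0.
apply: le_trans gain_ge; rewrite lerN2 ea ler_nat; lia.
Qed.

Lemma nearest_gain_ge (r a : C) : pam M a -> pam_nearest r a ->
  - (M - 1)%:R <= a * (r - a).
Proof.
move=> /pamP [k hk [] ea] near; first exact: nearest_gain_ge_pos ea near.
rewrite -gainN; apply: (nearest_gain_ge_pos hk _ (pam_nearestN near)).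
by rewrite ea opprK.
Qed.

(* If r exceeds the outer point M - 1 by more than n >= 0, the nearest point
   is M - 1 itself and the gain exceeds n (M - 1). *)
Lemma nearest_gain_gt_pos (r a n : C) : (2 <= M)%N -> ~~ odd M ->
  pam M a -> pam_nearest r a -> 0 <= n -> n + (M - 1)%:R < r ->
  n * (M - 1)%:R < a * (r - a).
Proof.
move=> hM2 hev ha near hn hnr; set m : C := (M - 1)%:R in hnr *.
have am : a <= m := real_ler_normlW (pam_real ha) (pam_bound ha).
have mr : m < r by apply: le_lt_trans hnr; rewrite lerDr.
have rm_ge0 : 0 <= r - m by rewrite subr_ge0 ltW.
have ra_ge0 : 0 <= r - a by apply: le_trans rm_ge0 _; rewrite lerD2l lerN2.
have := near _ (pam_outer C hM2 hev).
rewrite ler_sqr ?nnegrE // lerD2l lerN2 => ma.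
have -> : a = m by apply/le_anti; rewrite am ma.
have m_gt0 : 0 < m by rewrite ltr0n subn_gt0.
by rewrite [n * m]mulrC ltr_pM2l // ltrBrDr.
Qed.

Lemma nearest_gain_gt (r a n : C) : (2 <= M)%N -> ~~ odd M ->
  pam M a -> r \is Num.real -> pam_nearest r a -> 0 <= n ->
  n + (M - 1)%:R < `|r| -> n * (M - 1)%:R < a * (r - a).
Proof.
move=> hM2 hev ha hr near hn; rewrite real_ltr_normr // => /orP[].
  exact: nearest_gain_gt_pos.
move=> hnr; rewrite -gainN.
by apply: nearest_gain_gt_pos; rewrite ?pamN //; apply: pam_nearestN.
Qed.
End NearestPoint.

Lemma sum0_le (R : numDomainType) (I : finType) (g : I -> R) (m : R) (i : I) :
  (forall j, - m <= g j) -> \sum_j g j = 0 -> g i <= m *+ (#|I| - 1).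
Proof.
move=> g_ge sum0.
have others : \sum_(j | j != i) - m <= \sum_(j | j != i) g j by apply: ler_sum.
have card_others : #|(fun j => j != i)| = (#|I| - 1)%N.
  by rewrite subn1 -(cardC1 i); apply: eq_card.
have sum_others : \sum_(j | j != i) g j = - g i.
  by apply/eqP; move: sum0; rewrite (bigD1 i) //= addrC => /eqP; rewrite addr_eq0.
by move: others; rewrite sumrN sumr_const card_others sum_others lerN2.
Qed.

Section Components.
Variable C : numClosedFieldType.

(* comp true and comp false are the real and imaginary parts; indexing them
   by a boolean lets the two coordinates of a QAM symbol be treated
   uniformly. *)
Definition comp (b : bool) (w : C) : C := if b then 'Re w else 'Im w.

Lemma comp_real (b : bool) (w : C) : comp b w \is Num.real.
Proof. by case: b; [exact: Creal_Re | exact: Creal_Im]. Qed.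

Lemma compB (b : bool) (z w : C) : comp b (z - w) = comp b z - comp b w.
Proof. by case: b; rewrite /comp raddfB. Qed.

Lemma qam_comp (M : nat) (b : bool) (w : C) :
  qam M w = pam M (comp b w) && pam M (comp (~~ b) w).
Proof. by case: b; rewrite /qam //= andbC. Qed.

Lemma normC2_comp (w : C) : `|w| ^+ 2 = \sum_b comp b w ^+ 2.
Proof. by rewrite normC2_Re_Im big_bool. Qed.

Lemma normC2_split (b : bool) (w : C) :
  `|w| ^+ 2 = comp b w ^+ 2 + comp (~~ b) w ^+ 2.
Proof. by rewrite normC2_Re_Im; case: b => //; rewrite addrC. Qed.

Lemma Re_conjM (w v : C) : 'Re (w^* * v) = \sum_b comp b w * comp b v.
Proof. by rewrite ReM Re_conj Im_conj mulNr opprK big_bool. Qed.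

Lemma dist_expand (z w : C) :
  `|z - w| ^+ 2 = `|z| ^+ 2 - 'Re (w^* * z) *+ 2 + `|w| ^+ 2.
Proof. by rewrite !normC2_comp Re_conjM !big_bool !compB /=; ring. Qed.

Definition setcomp (b : bool) (w v : C) : C :=
  if b then v + 'i * 'Im w else 'Re w + 'i * v.

Lemma setcomp_same (b : bool) (w v : C) : v \is Num.real ->
  comp b (setcomp b w v) = v.
Proof.
by move=> hv; case: b; rewrite /comp /setcomp ?Re_rect ?Im_rect ?Creal_Re ?Creal_Im.
Qed.

Lemma setcomp_other (b : bool) (w v : C) : v \is Num.real ->
  comp (~~ b) (setcomp b w v) = comp (~~ b) w.
Proof.
by move=> hv; case: b; rewrite /comp /setcomp ?Re_rect ?Im_rect ?Creal_Re ?Creal_Im.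
Qed.
End Components.

Lemma AGM2_le (R : numDomainType) (a b u : R) : 0 <= a -> 0 <= b -> 0 <= u ->
  u ^+ 2 <= a * b -> u *+ 2 <= a + b.
Proof.
move=> ha hb hu h.
rewrite -ler_sqr ?nnegrE ?mulrn_wge0 ?addr_ge0 // exprMn_n.
apply: le_trans (ler_wMn2r _ h) _.
exact: (real_leif_AGM2_scaled (ger0_real ha) (ger0_real hb)).1.
Qed.

Section Codebook.
Variable C : numClosedFieldType.
Variable T : nat.
Implicit Types (x y z w : 'I_T -> C).

Definition sqdist z w : C := \sum_t `|z t - w t| ^+ 2.

Lemma sqdist_scaled (lam : C) y w :
  sqdist (fun t => lam * y t) w =
  \sum_t `|lam * y t| ^+ 2 - 'Re (lam * hinner w y) *+ 2 + normsq w.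
Proof.
rewrite /sqdist /normsq /hinner (eq_bigr _ (fun t _ => dist_expand _ _)).
rewrite !big_split /= sumrN sumrMnl -raddf_sum mulr_sumr.
by congr (_ - 'Re _ *+ 2 + _); apply: eq_bigr => t _; rewrite mulrCA.
Qed.

(* Codewords are nonzero, since 0 is not a PAM point. *)
Lemma normsq_gt0 (M : nat) x (t : 'I_T) : in_codebook M x -> 0 < normsq x.
Proof.
move=> hx; have xt_neq0 : x t != 0.
  apply: contraTneq (hx t) => ->; apply/negP.
  by rewrite /qam raddf0 => /andP [/pam_neq0]; rewrite eqxx.
rewrite /normsq (bigD1 t) //= ltr_pwDl ?exprn_gt0 ?normr_gt0 //.
by apply: sumr_ge0 => u _; rewrite exprn_ge0.
Qed.

(* GLRT optimality of x implies that x is at least as close to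
   z = (||x||^2 / x^dagger y) y as any x' with positive norm: after expanding
   the distances, this reduces to AM-GM applied to |x'^dagger z|. *)
Lemma glrt_nearest y x x' :
  0 < normsq x -> 0 < normsq x' -> hinner x y != 0 ->
  glrt_metric x' y <= glrt_metric x y ->
  sqdist (fun t => normsq x / hinner x y * y t) x <=
  sqdist (fun t => normsq x / hinner x y * y t) x'.
Proof.
set N := normsq x; set N' := normsq x'; set p := hinner x y; set q := hinner x' y.
move=> hN hN' hp hmet.
rewrite !sqdist_scaled -/p -/q -/N -/N' divfK //.
have -> : 'Re N = N by apply/Creal_ReP; exact: gtr0_real.
rewrite -!addrA lerD2l mulr2n opprD addrNK addrC lerBrDr addrC lerBlDr.
set u := `|N / p * q|.
apply: le_trans (ler_wMn2r 2 (leif_Re_Creal _).1) _; rewrite -/u.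
apply: AGM2_le; [exact: ltW | exact: ltW | exact: normr_ge0 |].
move: hmet; rewrite /glrt_metric -/p -/q -/N -/N' ler_pdivrMr // => hmet.
rewrite /u normrM exprMn; apply: le_trans (ler_wpM2l _ hmet) _.
  by rewrite exprn_ge0.
rewrite normf_div (ger0_norm (ltW hN)) expr_div_n mulrA.
rewrite [_ / `|p| ^+ 2 * (_ / N)]mulrA divfK; last by rewrite expf_neq0 // normr_eq0.
by rewrite expr2 mulfK ?gt_eqF // mulrC.
Qed.
End Codebook.

Section Optimum.
Variable C : numClosedFieldType.
Variables M T : nat.
Implicit Types (x y z : 'I_T -> C).

Lemma codebook_pam x (t : 'I_T) (b : bool) :
  in_codebook M x -> pam M (comp b (x t)).
Proof. by move=> hx; have := hx t; rewrite (qam_comp _ b) => /andP []. Qed.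

Definition upd x (s : 'I_T) (v : C) : 'I_T -> C :=
  fun u => if u == s then v else x u.

Lemma sqdist_upd z x (s : 'I_T) (v : C) :
  sqdist z x <= sqdist z (upd x s v) -> `|z s - x s| ^+ 2 <= `|z s - v| ^+ 2.
Proof.
have same_rest : \sum_(u | u != s) `|z u - upd x s v u| ^+ 2 =
                 \sum_(u | u != s) `|z u - x u| ^+ 2.
  by apply: eq_bigr => u /negbTE u_neq; rewrite /upd u_neq.
rewrite /sqdist (bigD1 s) //= [X in _ <= X](bigD1 s) //= same_rest.
by rewrite /upd eqxx lerD2r.
Qed.

(* A codeword nearest to z is nearest componentwise: since the codebook is
   a product of PAM alphabets, each real or imaginary part of x can be
   changed independently. *)
Lemma codebook_nearest_comp z x : in_codebook M x ->
  (forall x', in_codebook M x' -> sqdist z x <= sqdist z x') ->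
  forall (s : 'I_T) (b : bool), pam_nearest M (comp b (z s)) (comp b (x s)).
Proof.
move=> hx nearest s b v hv; have v_real := pam_real hv.
pose x' := upd x s (setcomp b (x s) v).
have hx' : in_codebook M x'.
  move=> u; rewrite /x' /upd; case: eqP => _; last exact: hx.
  by rewrite (qam_comp _ b) setcomp_same // setcomp_other // hv codebook_pam.
have := sqdist_upd (nearest _ hx').
by rewrite !(normC2_split b) !compB setcomp_same // setcomp_other // lerD2r.
Qed.

(* The gain of x with respect to z at coordinate t and component b (real or
   imaginary part); the 2T gains are the terms of Re (x^dagger (z - x)). *)
Definition gain z x (tb : 'I_T * bool) : C :=
  comp tb.2 (x tb.1) * (comp tb.2 (z tb.1) - comp tb.2 (x tb.1)).

(* With lambda = ||x||^2 / x^dagger y the residual z - x of z = lambda y is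
   orthogonal to x, so the gains sum to 0. *)
Lemma residual_orthogonal y x : hinner x y != 0 ->
  \sum_tb gain (fun t => normsq x / hinner x y * y t) x tb = 0.
Proof.
move=> hp; set z := fun t => normsq x / hinner x y * y t.
have herm0 : \sum_t (x t)^* * (z t - x t) = 0.
  rewrite (eq_bigr (fun t => normsq x / hinner x y * ((x t)^* * y t)
                             - `|x t| ^+ 2)); last first.
    by move=> t _; rewrite mulrBr mulrCA normCKC.
  by rewrite sumrB -mulr_sumr divfK // subrr.
transitivity ('Re (\sum_t (x t)^* * (z t - x t))); last by rewrite herm0 raddf0.
rewrite -(pair_bigA _ (fun t b => gain z x (t, b))) raddf_sum.
apply: eq_bigr => t _ /=.
by rewrite Re_conjM; apply: eq_bigr => b _; rewrite compB.
Qed.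
End Optimum.

Unset Implicit Arguments. Set Strict Implicit.

Theorem theorem2 (C : numClosedFieldType) (M T : nat)
  (hM2 : (2 <= M)%N) (hMeven : ~~ odd M) (hT : (1 <= T)%N)
  (y : 'I_T -> C) (hy : exists t, y t != 0)
  (xopt : 'I_T -> C) (hxopt : in_codebook M xopt)
  (hmax : forall xh : 'I_T -> C, in_codebook M xh ->
            glrt_metric xh y <= glrt_metric xopt y) :
  let hopt := hinner xopt y / normsq xopt in
  let lopt := hopt^-1 in
  forall t : 'I_T,
    `|'Re (lopt * y t)| <= (M + 2 * T - 2)%N%:R /\
    `|'Im (lopt * y t)| <= (M + 2 * T - 2)%N%:R.
Proof.
move=> hopt lopt t; rewrite /lopt /hopt.
(* If x^dagger y = 0 then lambda_opt = 0^-1 = 0 and the bound is trivial. *)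
have [p0 | p_neq0] := eqVneq (hinner xopt y) 0.
  by rewrite p0 mul0r invr0 mul0r !raddf0 normr0 ler0n.
rewrite invf_div; set z := fun u => normsq xopt / hinner xopt y * y u.
set m : C := (M - 1)%:R; set n : C := (2 * T - 1)%:R.
have nearest x' : in_codebook M x' -> sqdist z xopt <= sqdist z x'.
  move=> hx'; apply: glrt_nearest (hmax _ hx') => //; exact: normsq_gt0 t _.
have near u b := codebook_nearest_comp hxopt nearest u b.
have gain_le tb : gain z xopt tb <= n * m.
  rewrite /n mulr_natl.
  have -> : (2 * T - 1 = #|{: 'I_T * bool}| - 1)%N.
    by rewrite card_prod card_ord card_bool mulnC.
  apply: (sum0_le tb _ (residual_orthogonal p_neq0)) => -[u b].
  exact: nearest_gain_ge (codebook_pam _ b hxopt) (near u b).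
have comp_bound b : `|comp b (z t)| <= n + m.
  rewrite real_leNgt ?normr_real ?rpredD ?realn //; apply/negP => big.
  have gain_big := nearest_gain_gt hM2 hMeven (codebook_pam _ b hxopt)
                     (comp_real _ _) (near t b) (ler0n _ _) big.
  by have := lt_le_trans gain_big (gain_le (t, b)); rewrite ltxx.
have -> : (M + 2 * T - 2)%:R = n + m :> C by rewrite -natrD; congr _%:R; lia.
exact: (conj (comp_bound true) (comp_bound false)).
Qed.
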